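(* Let $\mathbb{T}\in\mathrm{Tr}(2\times\mathbb{N})$. The system $\{z_\eta:\eta\in 2^{<\mathbb{N}}\setminus\{\emptyset\}\}$ is a $1$-unconditional shrinking basis of $E_{\mathbb{T}}$.
   Context: Trees: a tree on $\Lambda$ is a subset of $\Lambda^{<\mathbb{N}}$ closed under initial segments; $[T]$ denotes its infinite branches; elements of a tree on $2\times\mathbb{N}$ are pairs $(\sigma,\nu)$ of sequences of equal length; for $\sigma\in2^{\mathbb{N}}$, $\mathbb{T}(\sigma)=\{\nu\in\mathbb{N}^{<\mathbb{N}}:(\sigma|_{|\nu|},\nu)\in\mathbb{T}\}$. For $\nu=(n_1,\dots,n_k)$ (or infinite) let $\tilde\nu=\{n_1,n_1+n_2,\dots\}$, and for $T\in\mathrm{Tr}(\mathbb{N})$ let $\mathcal{M}_T=\{\tilde\nu:\nu\in T\cup[T]\text{ or }|\nu|\le3\}$. For a compact family $\mathcal{M}$ of subsets of $\mathbb{N}$, $\|\cdot\|_{\mathcal{M}}$ is the norm on $c_{00}$ given as the Minkowski gauge of the smallest absolutely convex $\Theta_{\mathcal{M}}\subset c_{00}$ containing all $e_i=\mathbf{1}_{\{i\}}$ and such that $\frac12\sum_k\mathbf{1}_{E_k}x_k\in\Theta_{\mathcal{M}}$ whenever $x_k\in\Theta_{\mathcal{M}}$ and $E_1<\dots<E_n$ are finite sets for which some element of $\mathcal{M}$ contains $m_1,\dots,m_n$ with $m_1\le E_1<m_2\le E_2<\dots<m_n\le E_n$. $E_{\mathbb{T}}$ is the completion of $c_{00}(2^{<\mathbb{N}}\setminus\{\emptyset\})$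 under $\|x\|_{\mathbb{T}}=\sup_{\sigma\in2^{\mathbb{N}}}\|\sum_{\ell\ge1}x(\sigma|_\ell)e_\ell\|_{\mathcal{M}_{\mathbb{T}(\sigma)}}$, and $z_\eta=\mathbf{1}_{\{\eta\}}$. A basis is $1$-unconditional if $\|\sum_{A}a_ix_i\|\le\|\sum_Ba_ix_i\|$ for finite $A\subset B$; shrinking if the dual functionals span a dense subspace of the dual. *)

From HB Require Import structures.
From mathcomp Require Import all_boot all_order all_algebra.
From mathcomp Require Import boolp classical_sets reals.
Set Implicit Arguments. Unset Strict Implicit. Unset Printing Implicit Defensive.
Import Order.TTheory GRing.Theory Num.Theory.
Local Open Scope classical_set_scope.
Local Open Scope ring_scope.

(* Convention: N = {1,2,3,...} is encoded by positive nats. *)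

Definition is_tree2N (T : set (seq bool * seq nat)) : Prop :=
  (forall s n, T (s, n) -> size s = size n) /\
  (forall s n k, T (s, n) -> T (take k s, take k n)) /\
  (forall s n, T (s, n) -> all (fun k => 0 < k)%N n).

Definition restr (sigma : nat -> bool) (l : nat) : seq bool := mkseq sigma l.

Definition Tsec (T : set (seq bool * seq nat)) (sigma : nat -> bool)
  : set (seq nat) := fun nu => T (restr sigma (size nu), nu).

Definition tilde (nu : seq nat) : set nat :=
  fun m => exists k, (0 < k <= size nu)%N /\ m = (\sum_(i < k) nth 0%N nu i)%N.

Definition tilde_inf (nu : nat -> nat) : set nat :=
  fun m => exists k, (0 < k)%N /\ m = (\sum_(i < k) nu i)%N.

Definition MT (S : set (seq nat)) : set (set nat) :=
  fun F =>
    (exists nu : seq nat,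
        (S nu \/ ((size nu <= 3)%N /\ all (fun k => 0 < k)%N nu)) /\ F = tilde nu)
    \/ (exists nu : nat -> nat, (forall k, S (mkseq nu k)) /\ F = tilde_inf nu).

Definition admissible (M : set (set nat)) (n : nat) (E : nat -> seq nat) : Prop :=
  exists F, M F /\ exists m : nat -> nat,
    (forall k, (k < n)%N -> F (m k)) /\
    (forall k, (k < n)%N -> E k != [::]) /\
    (forall k i, (k < n)%N -> i \in E k -> (m k <= i)%N) /\
    (forall k i, (k.+1 < n)%N -> i \in E k -> (i < m k.+1)%N).

Section Norms.
Variable R : realType.

Definition e (i : nat) : nat -> R := fun j => if j == i then 1 else 0.

Definition theta_closed (M : set (set nat)) (S : set (nat -> R)) : Prop :=
  (forall i, (0 < i)%N -> S (e i)) /\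
  (forall x y (a b : R), S x -> S y -> `|a| + `|b| <= 1 ->
      S (fun i => a * x i + b * y i)) /\
  (forall (n : nat) (x : nat -> nat -> R) (E : nat -> seq nat),
      (forall k, (k < n)%N -> S (x k)) -> admissible M n E ->
      S (fun i => 2^-1 * \sum_(k < n) (if i \in E k then x k i else 0))).

Definition Theta (M : set (set nat)) : set (nat -> R) :=
  fun x => forall S, theta_closed M S -> S x.

Definition normM (M : set (set nat)) (x : nat -> R) : R :=
  inf [set t : R | 0 < t /\ Theta M (fun i => t^-1 * x i)].

Definition normT (T : set (seq bool * seq nat)) (x : seq bool -> R) : R :=
  sup [set r : R | exists sigma : nat -> bool,
         r = normM (MT (Tsec T sigma))
               (fun l => if l == 0%N then 0 else x (restr sigma l))].

Definition c00T (x : seq bool -> R) : Prop :=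
  x [::] = 0 /\ exists s : seq (seq bool), forall eta, eta \notin s -> x eta = 0.

Definition z (eta : seq bool) : seq bool -> R :=
  fun xi => if xi == eta then 1 else 0.

Definition lincomb (A : seq (seq bool)) (a : seq bool -> R) : seq bool -> R :=
  fun xi => if xi \in A then a xi else 0.

Definition linear_c00 (f : (seq bool -> R) -> R) : Prop :=
  forall x y (a b : R), c00T x -> c00T y ->
    f (fun eta => a * x eta + b * y eta) = a * f x + b * f y.

(* bounded linear functionals on (c00, ||.||_T) = elements of E_T^*;
   shrinking: the biorthogonal functionals z*_eta (x |-> x(eta)) span a
   norm-dense subspace of E_T^* *)
Definition shrinkingT (T : set (seq bool * seq nat)) : Prop :=
  forall f : (seq bool -> R) -> R, linear_c00 f ->
    (exists C : R, forall x, c00T x -> `|f x| <= C * normT T x) ->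
    forall eps : R, 0 < eps ->
      exists (F : seq (seq bool)) (c : seq bool -> R),
        [::] \notin F /\
        forall x, c00T x ->
          `|f x - \sum_(eta <- F) c eta * x eta| <= eps * normT T x.

End Norms.

From HB Require Import structures.
From mathcomp Require Import all_boot all_order all_algebra.
From mathcomp Require Import boolp classical_sets reals.
From mathcomp Require Import ring lra zify.
Unset Printing Implicit Defensive.
Import Order.TTheory GRing.Theory Num.Theory.
Local Open Scope classical_set_scope.
Local Open Scope ring_scope.

(* Unconditionality: Theta_M is stable under restricting vectors to any set of coordinates,
   since each closure rule commutes with restriction; so the gauge ||.||_M, and with it
   ||.||_T, can only decrease under restriction. Positivity of ||z_eta||_T holds because
   Theta_M lies in the unit ball of the sup norm.

   Shrinking: if a bounded functional f were not eps-approximated by finitely many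
   coordinate functionals, then beyond every level there would be vectors y of norm at
   most 1 with f y >= eps. Three vectors supported on successive blocks of levels are
   admissible for every M_T(sigma), because M_T(sigma) contains all sets of at most three
   positive integers; so their sum has norm at most twice the largest norm, while f of it
   is the sum of the three values. Iterating gives x_j with ||x_j||_T <= 2^j and
   f x_j >= 3^j eps, which contradicts the boundedness of f. Nothing here uses that T is
   a tree. *)

Lemma admissible_disjoint {M n E j k i} : admissible M n E -> (j < k < n)%N ->
  i \in E j -> i \in E k -> False.
Proof.
case=> F [_ [m [_ [E_neq0 [m_le m_gt]]]]] /andP[jk kn] iEj iEk.
have m_incr l : (l.+1 < n)%N -> (m l < m l.+1)%N.
  move=> ln; have := E_neq0 l (ltnW ln).
  case El: (E l) => [|i' s] // _; have i'El : i' \in E l by rewrite El mem_head.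
  exact: leq_ltn_trans (m_le _ _ (ltnW ln) i'El) (m_gt _ _ ln i'El).
have m_mono d : (j.+1 + d < n)%N -> (m j.+1 <= m (j.+1 + d))%N.
  elim: d => [|d IHd] jdn; first by rewrite addn0.
  rewrite addnS in jdn *; exact: leq_trans (IHd (ltnW jdn)) (ltnW (m_incr _ jdn)).
have := m_mono (k - j.+1)%N; rewrite subnKC // => /(_ kn) mjk.
have := m_gt _ _ (leq_ltn_trans jk kn) iEj; have := m_le _ _ kn iEk; lia.
Qed.

Lemma ler_sum_mem {R : numDomainType} {I : eqType} {r : seq I} {i : I} (F : I -> R) :
  (forall j, 0 <= F j) -> i \in r -> F i <= \sum_(j <- r) F j.
Proof.
move=> F_ge0; elim: r => // j r IHr; rewrite inE big_cons => /predU1P[->|ir].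
  by rewrite lerDl sumr_ge0.
by rewrite (le_trans (IHr ir)) // lerDr.
Qed.

Definition supported_in {R : realType} (v : nat -> R) (a b : nat) :=
  forall l, v l != 0 -> (a <= l < b)%N.

Definition gauge_set {R : realType} (M : set (set nat)) (v : nat -> R) : set R :=
  [set t | 0 < t /\ Theta M (fun i => t^-1 * v i)].

Section Theta.
Context {R : realType} {M : set (set nat)}.
Implicit Types (v w : nat -> R).

Lemma Theta_e {i} : (0 < i)%N -> Theta M (e R i).
Proof. by move=> i_gt0 S [Se _]; apply: Se. Qed.

Lemma Theta_comb {v w} a b : Theta M v -> Theta M w -> `|a| + `|b| <= 1 ->
  Theta M (fun i => a * v i + b * w i).
Proof.
by move=> Tv Tw ab S SM; case: (SM) => _ [Scomb _]; apply: Scomb; [apply: Tv | apply: Tw |].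
Qed.

Lemma Theta_adm {n} {v : nat -> nat -> R} {E} :
  (forall k, (k < n)%N -> Theta M (v k)) -> admissible M n E ->
  Theta M (fun i => 2^-1 * \sum_(k < n) (if i \in E k then v k i else 0)).
Proof. by move=> Tv adm S SM; case: (SM) => _ [_ Sadm]; apply: Sadm => // k kn; apply: Tv. Qed.

Lemma eq_Theta {v} w : Theta M v -> v =1 w -> Theta M w.
Proof. by move=> Tv /funext <-. Qed.

Lemma Theta_scale {v} c : Theta M v -> `|c| <= 1 -> Theta M (fun i => c * v i).
Proof.
move=> Tv c_le1; apply: eq_Theta (Theta_comb c 0 Tv Tv _) _; first by rewrite normr0 addr0.
by move=> i; rewrite mul0r addr0.
Qed.

Lemma Theta0 : Theta M (fun _ => 0 : R).
Proof.
apply: eq_Theta (Theta_scale 0 (Theta_e (ltn0Sn 0)) _) _; first by rewrite normr0.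
by move=> i; rewrite mul0r.
Qed.

Lemma Theta_mask {v} (D : pred nat) : Theta M v -> Theta M (fun i => if D i then v i else 0).
Proof.
move=> Tv; move: D.
apply: (Tv (fun v => forall D : pred nat, Theta M (fun i => if D i then v i else 0))).
split; [|split].
- move=> i i_gt0 D; case: (boolP (D i)) => Di.
    apply: eq_Theta (Theta_e i_gt0) _ => j.
    by rewrite /e; case: eqP => [->|_]; rewrite ?Di ?if_same.
  apply: eq_Theta Theta0 _ => j.
  by rewrite /e; case: eqP => [->|]; rewrite ?(negbTE Di) ?if_same.
- move=> x y a b Tx Ty ab D; apply: eq_Theta (Theta_comb a b (Tx D) (Ty D) ab) _.
  by move=> i; case: (D i); rewrite ?mulr0 ?addr0.
- move=> n x E Tx adm D; apply: eq_Theta (Theta_adm (fun k kn => Tx k kn D) adm) _.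
  move=> i; case: (D i) => //.
  by rewrite big1 ?mulr0 // => k _; rewrite if_same.
Qed.

Lemma Theta_le1 {v} : Theta M v -> forall i, `|v i| <= 1.
Proof.
move=> Tv; apply: (Tv (fun v => forall i, `|v i| <= 1)); split; [|split].
- by move=> i _ j; rewrite /e; case: eqP; rewrite ?normr1 ?normr0.
- move=> x y a b x_le1 y_le1 ab i; apply: le_trans (ler_normD _ _) (le_trans _ ab).
  by rewrite !normrM lerD // ler_piMr.
- move=> n x E x_le1 adm i; rewrite normrM ger0_norm ?invr_ge0 // ler_pdivrMl // mulr1.
  apply: le_trans (ler_wpDl ler01 (lexx _)).
  have [[k kn iEk]|no_k] := pselect (exists2 k, (k < n)%N & i \in E k).
    rewrite (bigD1 (Ordinal kn)) //= iEk big1 ?addr0; first exact: x_le1.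
    move=> k' k'k; case: ifP => // iEk'; exfalso.
    have k'_neq_k : nat_of_ord k' != k by apply: contraNneq k'k => k'_k; apply/eqP/val_inj.
    case: (ltngtP k' k) => [k'k_lt|kk'_lt|k'_k]; last by rewrite k'_k eqxx in k'_neq_k.
      by apply: (admissible_disjoint adm _ iEk' iEk); rewrite k'k_lt kn.
    by apply: (admissible_disjoint adm _ iEk iEk'); rewrite kk'_lt ltn_ord.
  rewrite big1 ?normr0 // => k _; case: ifP => // iEk.
  by exfalso; apply: no_k; exists k.
Qed.

Lemma Theta_l1 {N v} : supported_in v 1 N.+1 -> \sum_(l < N.+1) `|v l| <= 1 -> Theta M v.
Proof.
elim: N v => [|N IHN] v v_supp v_sum.
  apply: eq_Theta Theta0 _ => l; apply/esym/eqP; apply: contraT => /v_supp; lia.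
rewrite big_ord_recr /= in v_sum.
set b := v N.+1 in v_sum; set s := \sum_(l < N.+1) _ in v_sum.
pose v' l := if (l <= N)%N then v l else 0.
have v_split l : v l = v' l + b * e R N.+1 l.
  rewrite /v' /e /b; case: eqP => [->|l_neq]; first by rewrite ltnn mulr1 add0r.
  rewrite mulr0 addr0; case: leqP => // lN; apply/eqP; apply: contraT => /v_supp; lia.
have v'_supp : supported_in v' 1 N.+1.
  move=> l; rewrite /v'; case: (leqP l N) => [lN vl|_]; last by rewrite eqxx.
  by have := v_supp l vl; lia.
have s_v' : s = \sum_(l < N.+1) `|v' l| by apply: eq_bigr => l _; rewrite /v' -ltnS ltn_ord.
have TeN : Theta M (e R N.+1) := Theta_e (ltn0Sn N).
have b_le1 : `|b| <= 1 by apply: le_trans v_sum; rewrite lerDr sumr_ge0.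
have v'_le_s l : `|v' l| <= s.
  have [lN|Nl] := ltnP l N.+1; last by rewrite /v' leqNgt Nl normr0 sumr_ge0.
  rewrite s_v' -(big_mkord (fun _ => true) (fun j => `|v' j|)).
  by apply: (ler_sum_mem (fun j => `|v' j|)) => //; rewrite mem_index_iota.
have [s0|s_neq0] := eqVneq s 0.
  have v'0 l : v' l = 0 by apply/normr0_eq0/le_anti; rewrite normr_ge0 -s0 v'_le_s.
  by apply: eq_Theta (Theta_scale b TeN b_le1) _ => l; rewrite v_split v'0 add0r.
have s_gt0 : 0 < s by rewrite lt_def s_neq0 sumr_ge0.
have Tx : Theta M (fun l => s^-1 * v' l).
  apply: IHN; first by move=> l; rewrite mulf_eq0 invr_eq0 (negbTE s_neq0) => /v'_supp.
  under eq_bigr do rewrite normrM ger0_norm ?invr_ge0 ?(ltW s_gt0) //.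
  by rewrite -mulr_sumr -s_v' mulVf.
apply: eq_Theta (Theta_comb s b Tx TeN _) _; first by rewrite ger0_norm ?(ltW s_gt0).
by move=> l; rewrite v_split mulrA mulfV // mul1r.
Qed.

Lemma gauge_set_lbound v : lbound (gauge_set M v) 0.
Proof. by move=> t [t_gt0 _]; apply: ltW. Qed.

Lemma normM_ge0 v : 0 <= normM M v.
Proof.
have [ne|empty] := pselect (gauge_set M v !=set0).
  exact: lb_le_inf ne (gauge_set_lbound v).
by rewrite /normM inf_out // => -[].
Qed.

Lemma normM_le {v t} : gauge_set M v t -> normM M v <= t.
Proof. by move=> vt; apply: ge_inf vt; exists 0; apply: gauge_set_lbound. Qed.

Lemma gauge_set_le {v s t} : gauge_set M v s -> s <= t -> gauge_set M v t.
Proof.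
move=> [s_gt0 Tv] st; have t_gt0 := lt_le_trans s_gt0 st; split => //.
apply: eq_Theta (Theta_scale (s / t) Tv _) _.
  by rewrite ger0_norm ?divr_ge0 ?(ltW s_gt0) ?(ltW t_gt0) // ler_pdivrMr // mul1r.
by move=> i; rewrite mulrA; congr (_ * _); rewrite mulrAC mulfV ?gt_eqF // mul1r.
Qed.

Lemma normM_lt_gauge_set {v t} : gauge_set M v !=set0 -> normM M v < t -> gauge_set M v t.
Proof. by move=> ne /(inf_lt ne) [s vs /ltW]; apply: gauge_set_le. Qed.

Lemma gauge_set_l1 {N v} t : 0 < t -> supported_in v 1 N.+1 ->
  \sum_(l < N.+1) `|v l| <= t -> gauge_set M v t.
Proof.
move=> t_gt0 v_supp v_sum; split => //; apply: Theta_l1.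
  by move=> l; rewrite mulf_eq0 invr_eq0 gt_eqF //=; apply: v_supp.
under eq_bigr do rewrite normrM ger0_norm ?invr_ge0 ?(ltW t_gt0) //.
by rewrite -mulr_sumr ler_pdivrMl // mulr1.
Qed.

Lemma gauge_set_scale {v} c {t} : c != 0 -> gauge_set M v t ->
  gauge_set M (fun i => c * v i) (`|c| * t).
Proof.
move=> c_neq0 [t_gt0 Tv]; split; first by rewrite mulr_gt0 ?normr_gt0.
apply: eq_Theta (Theta_scale (c / `|c|) Tv _) _.
  by rewrite normrM normfV normr_id mulfV ?normr_eq0.
by move=> i; rewrite invfM; ring.
Qed.

Lemma normM_scale {v} c : gauge_set M v !=set0 ->
  normM M (fun i => c * v i) <= `|c| * normM M v.
Proof.
move=> ne; have [->|c_neq0] := eqVneq c 0.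
  rewrite normr0 mul0r; apply/ler_addgt0Pr => r r_gt0; rewrite add0r normM_le //.
  by split => //; apply: eq_Theta Theta0 _ => i; rewrite !mul0r mulr0.
rewrite -ler_pdivrMl ?normr_gt0 //; apply: lb_le_inf ne _ => t vt.
by rewrite ler_pdivrMl ?normr_gt0 //; apply/normM_le/gauge_set_scale.
Qed.

Lemma normM_mask {v} (D : pred nat) : gauge_set M v !=set0 ->
  normM M (fun i => if D i then v i else 0) <= normM M v.
Proof.
move=> ne; apply: lb_le_inf ne _ => t [t_gt0 Tv]; apply: normM_le; split => //.
by apply: eq_Theta (Theta_mask D Tv) _ => i; case: (D i); rewrite ?mulr0.
Qed.

Lemma normr_le_normM {v} i : gauge_set M v !=set0 -> `|v i| <= normM M v.
Proof.
move=> ne; apply: lb_le_inf ne _ => t [t_gt0 Tv]; have := Theta_le1 Tv i.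
by rewrite normrM ger0_norm ?invr_ge0 ?(ltW t_gt0) // ler_pdivrMl // mulr1.
Qed.
End Theta.

Definition interval_blocks (c : seq nat) (k : nat) : seq nat :=
  (iota (nth 0 c k) (nth 0 c k.+1 - nth 0 c k))%N.

Lemma mem_interval_blocks c k l :
  (l \in interval_blocks c k) = (nth 0 c k <= l < nth 0 c k.+1)%N.
Proof. by rewrite mem_iota; apply/idP/idP; lia. Qed.

Lemma admissible_three_blocks (S : set (seq nat)) {c0 c1 c2 c3} :
  (0 < c0 < c1)%N -> (c1 < c2 < c3)%N ->
  admissible (MT S) 3 (interval_blocks [:: c0; c1; c2; c3]).
Proof.
move=> /andP[c0_gt0 c01] /andP[c12 c23].
exists (tilde [:: c0; c1 - c0; c2 - c1]%N); split.
  left; exists [:: c0; c1 - c0; c2 - c1]%N; split => //; right.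
  by rewrite /= c0_gt0 !subn_gt0 c01 c12.
exists (nth 0%N [:: c0; c1; c2; c3]); split; [|split; [|split]].
- move=> k k3; exists k.+1; split; first by rewrite /=; lia.
  by case: k k3 => [|[|[|k]]] // _; rewrite !big_ord_recr big_ord0 /=; lia.
- by case=> [|[|[|k]]] //= _; rewrite -size_eq0 size_iota /=; lia.
- by move=> k i _; rewrite mem_interval_blocks => /andP[].
- by case=> [|[|k]] // i _; rewrite mem_interval_blocks => /andP[].
Qed.

Lemma gauge_set_three_blocks {R : realType} (S : set (seq nat)) {v1 v2 v3 : nat -> R}
    {c0 c1 c2 c3 t} :
  (0 < c0 < c1)%N -> (c1 < c2 < c3)%N ->
  supported_in v1 c0 c1 -> supported_in v2 c1 c2 -> supported_in v3 c2 c3 ->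
  gauge_set (MT S) v1 t -> gauge_set (MT S) v2 t -> gauge_set (MT S) v3 t ->
  gauge_set (MT S) (fun l => v1 l + v2 l + v3 l) (2 * t).
Proof.
move=> c01 c23 v1_supp v2_supp v3_supp [t_gt0 T1] [_ T2] [_ T3].
split; first by rewrite mulr_gt0.
pose v k l := t^-1 * nth (fun _ => 0) [:: v1; v2; v3] k l.
have Tv k : (k < 3)%N -> Theta (MT S) (v k) by case: k => [|[|[|k]]].
apply: eq_Theta (Theta_adm Tv (admissible_three_blocks S c01 c23)) _ => l.
have blockE w a b : supported_in w a b ->
    (if (a <= l < b)%N then t^-1 * w l else 0) = t^-1 * w l.
  by move=> w_supp; case: ifPn => // lab; rewrite (eqP (contraNT (w_supp l) lab)) mulr0.
rewrite !big_ord_recr big_ord0 /= add0r !mem_interval_blocks /= /v /=.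
by rewrite !blockE // invfM; ring.
Qed.

Section C00.
Context {R : realType}.
Implicit Types (x y : seq bool -> R).

Lemma c00_add {x y} : c00T x -> c00T y -> c00T (fun eta => x eta + y eta).
Proof.
move=> [x_nil [s x_supp]] [y_nil [s' y_supp]]; split; first by rewrite x_nil y_nil addr0.
exists (s ++ s') => eta; rewrite mem_cat negb_or => /andP[/x_supp -> /y_supp ->].
by rewrite addr0.
Qed.

Lemma c00_scale x c : c00T x -> c00T (fun eta => c * x eta).
Proof.
move=> [x_nil [s x_supp]]; split; first by rewrite x_nil mulr0.
by exists s => eta /x_supp ->; rewrite mulr0.
Qed.

Lemma c00_mask x (P : pred (seq bool)) : c00T x -> c00T (fun eta => if P eta then x eta else 0).
Proof.
move=> [x_nil [s x_supp]]; split; first by rewrite x_nil if_same.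
by exists s => eta /x_supp ->; rewrite if_same.
Qed.

Lemma c00_lincomb F (a : seq bool -> R) : [::] \notin F -> c00T (lincomb F a).
Proof.
move=> nil_F; split; first by rewrite /lincomb (negbTE nil_F).
by exists F => eta eta_F; rewrite /lincomb (negbTE eta_F).
Qed.

Lemma c00_z {eta} : eta != [::] -> c00T (z R eta).
Proof.
move=> eta_neq; split; first by rewrite /z eq_sym (negbTE eta_neq).
by exists [:: eta] => xi; rewrite inE /z => /negbTE ->.
Qed.
End C00.

Section TreeNorm.
Context {R : realType} (T : set (seq bool * seq nat)).
Implicit Types (x y : seq bool -> R) (sigma : nat -> bool).

Definition branch x sigma : nat -> R := fun l => if l == 0%N then 0 else x (restr sigma l).

Definition supported_levels x (a b : nat) := forall eta, x eta != 0 -> (a <= size eta < b)%N.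

Definition supported_beyond x (L : nat) := forall eta, x eta != 0 -> (L < size eta)%N.

Lemma supported_levelsW {x a b a' b'} : supported_levels x a b ->
  (a' <= a)%N -> (b <= b')%N -> supported_levels x a' b'.
Proof. by move=> x_supp a'a bb' eta x_eta; have := x_supp _ x_eta; lia. Qed.

Lemma supported_levelsD {x y a b} : supported_levels x a b -> supported_levels y a b ->
  supported_levels (fun eta => x eta + y eta) a b.
Proof.
move=> x_supp y_supp eta; have [x0|x_eta _] := eqVneq (x eta) 0; last exact: x_supp x_eta.
by rewrite x0 add0r; apply: y_supp.
Qed.

Lemma size_restr sigma l : size (restr sigma l) = l.
Proof. exact: size_mkseq. Qed.

Lemma supported_branch {x a b} sigma :
  supported_levels x a b -> supported_in (branch x sigma) a b.
Proof.
move=> x_supp l; rewrite /branch; case: (l =P 0%N) => [_|_ x_l]; first by rewrite eqxx.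
by rewrite -(size_restr sigma l); apply: x_supp x_l.
Qed.

Lemma c00_bounded {x} : c00T x ->
  exists N K, supported_levels x 1 N.+1 /\ forall eta, `|x eta| <= K.
Proof.
case=> x_nil [s x_supp]; exists (\max_(xi <- s) size xi), (\sum_(xi <- s) `|x xi|); split.
  move=> eta x_eta; have eta_s : eta \in s by apply: contraNT x_eta => /x_supp ->.
  rewrite ltnS leq_bigmax_seq // andbT lt0n size_eq0.
  by apply: contraNneq x_eta => ->; rewrite x_nil.
move=> eta; have [eta_s|eta_s] := boolP (eta \in s); last by rewrite x_supp // normr0 sumr_ge0.
exact: (ler_sum_mem (fun xi => `|x xi|)).
Qed.

Lemma supported_beyond_block {x L} : c00T x -> supported_beyond x L ->
  exists b, (L.+1 < b)%N /\ supported_levels x L.+1 b.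
Proof.
move=> /c00_bounded [N [_ [x_supp _]]] x_beyond; exists (maxn L.+2 N.+1).
split=> [|eta x_eta]; first by rewrite leq_max leqnn.
by have := x_beyond _ x_eta; have := x_supp _ x_eta; lia.
Qed.

Lemma branch_gauge_bounded {x} : c00T x ->
  exists B, forall M sigma, gauge_set M (branch x sigma) B.
Proof.
move=> /c00_bounded [N [K [x_supp x_le]]].
have K_ge0 : 0 <= K := le_trans (normr_ge0 _) (x_le [::]).
exists (K *+ N.+1 + 1) => M sigma.
apply: (gauge_set_l1 _ _ (supported_branch sigma x_supp)); first by rewrite ltr_wpDl ?mulrn_wge0.
have branch_le l : `|branch x sigma l| <= K.
  by rewrite /branch; case: (l =P 0%N) => _ //; rewrite normr0.
have -> : K *+ N.+1 = \sum_(l < N.+1) K by rewrite sumr_const card_ord.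
by rewrite -[leLHS]addr0 lerD // ler_sum.
Qed.

Lemma branch_le_normT {x} sigma : c00T x ->
  normM (MT (Tsec T sigma)) (branch x sigma) <= normT T x.
Proof.
move=> /branch_gauge_bounded [B x_B]; apply: ub_le_sup; last by exists sigma.
by exists B; move=> _ [sigma' ->]; apply: normM_le (x_B _ sigma').
Qed.

Lemma normT_le_branches x B :
  (forall sigma, normM (MT (Tsec T sigma)) (branch x sigma) <= B) -> normT T x <= B.
Proof.
move=> x_B; apply: ge_sup => [|_ [sigma ->] //].
by exists (normM (MT (Tsec T (fun _ => false))) (branch x (fun _ => false))), (fun _ => false).
Qed.

Lemma normT_ge0 {x} : c00T x -> 0 <= normT T x.
Proof. by move=> x_c00; apply: le_trans (normM_ge0 _) (branch_le_normT (fun _ => false) x_c00). Qed.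

Lemma normT_lt_gauge_set x sigma t : c00T x -> normT T x < t ->
  gauge_set (MT (Tsec T sigma)) (branch x sigma) t.
Proof.
move=> x_c00 x_t; have [B x_B] := branch_gauge_bounded x_c00.
by apply: normM_lt_gauge_set; [exists B | apply: le_lt_trans (branch_le_normT sigma x_c00) x_t].
Qed.

Lemma normT_mask x (P : pred (seq bool)) : c00T x ->
  normT T (fun eta => if P eta then x eta else 0) <= normT T x.
Proof.
move=> x_c00; have [B x_B] := branch_gauge_bounded x_c00.
apply: normT_le_branches => sigma; apply: le_trans (branch_le_normT sigma x_c00).
have -> : branch (fun eta => if P eta then x eta else 0) sigma =
          fun l => if P (restr sigma l) then branch x sigma l else 0.
  by apply/funext => l; rewrite /branch; case: (l == 0%N); rewrite ?if_same.
by apply: normM_mask; exists B.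
Qed.

Lemma normT_scale x c : c00T x -> normT T (fun eta => c * x eta) <= `|c| * normT T x.
Proof.
move=> x_c00; have [B x_B] := branch_gauge_bounded x_c00.
apply: normT_le_branches => sigma.
have -> : branch (fun eta => c * x eta) sigma = fun l => c * branch x sigma l.
  by apply/funext => l; rewrite /branch; case: (l == 0%N); rewrite ?mulr0.
apply: le_trans (normM_scale c _) _; first by exists B.
by rewrite ler_wpM2l // branch_le_normT.
Qed.

Lemma normT_z_gt0 eta : eta != [::] -> 0 < normT T (z R eta).
Proof.
move=> eta_neq; pose sigma i := nth false eta i.
have size_gt0 : (0 < size eta)%N by rewrite lt0n size_eq0.
have branch_z : branch (z R eta) sigma = e R (size eta).
  apply/funext => l; rewrite /branch /e /z; case: (l =P 0%N) => [->|_].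
    by rewrite eq_sym size_eq0 (negbTE eta_neq).
  have [->|l_neq] := eqVneq l (size eta); first by rewrite /restr mkseq_nth !eqxx.
  by case: eqP => // /(congr1 size); rewrite size_restr => /eqP; rewrite (negbTE l_neq).
have e_gauge : gauge_set (MT (Tsec T sigma)) (e R (size eta)) 1.
  by split => //; apply: eq_Theta (Theta_e size_gt0) _ => l; rewrite invr1 mul1r.
apply: (lt_le_trans ltr01); apply: le_trans (branch_le_normT sigma (c00_z eta_neq)).
rewrite branch_z; have := normr_le_normM (size eta) (ex_intro _ 1 e_gauge).
by rewrite /e eqxx normr1.
Qed.

Lemma normT_lincomb_subset A B (a : seq bool -> R) : [::] \notin B -> {subset A <= B} ->
  normT T (lincomb A a) <= normT T (lincomb B a).
Proof.
move=> nil_B AB.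
have -> : lincomb A a = fun eta => if eta \in A then lincomb B a eta else 0.
  by apply/funext => eta; rewrite /lincomb; case: (boolP (eta \in A)) => // /AB ->.
exact/normT_mask/c00_lincomb.
Qed.

Lemma normT_three_blocks x1 x2 x3 c0 c1 c2 c3 B :
  (0 < c0 < c1)%N -> (c1 < c2 < c3)%N -> c00T x1 -> c00T x2 -> c00T x3 ->
  supported_levels x1 c0 c1 -> supported_levels x2 c1 c2 -> supported_levels x3 c2 c3 ->
  normT T x1 <= B -> normT T x2 <= B -> normT T x3 <= B ->
  normT T (fun eta => x1 eta + x2 eta + x3 eta) <= 2 * B.
Proof.
move=> c01 c23 x1_c00 x2_c00 x3_c00 x1_supp x2_supp x3_supp x1_B x2_B x3_B.
apply/ler_addgt0Pr => r r_gt0; set t := B + r / 2.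
have Bt : B < t by rewrite ltrDl divr_gt0.
have -> : 2 * B + r = 2 * t by rewrite /t; field.
apply: normT_le_branches => sigma; apply: normM_le.
have -> : branch (fun eta => x1 eta + x2 eta + x3 eta) sigma =
          fun l => branch x1 sigma l + branch x2 sigma l + branch x3 sigma l.
  by apply/funext => l; rewrite /branch; case: (l == 0%N); rewrite ?addr0.
apply: (gauge_set_three_blocks _ c01 c23 (supported_branch sigma x1_supp)
  (supported_branch sigma x2_supp) (supported_branch sigma x3_supp));
  apply: normT_lt_gauge_set => //; exact: le_lt_trans Bt.
Qed.
End TreeNorm.

Definition seqs_upto (L : nat) : seq (seq bool) :=
  undup (flatten [seq [seq tval t | t <- enum {: k.-tuple bool}] | k <- iota 1 L]).

Lemma mem_seqs_upto L eta : (eta \in seqs_upto L) = (0 < size eta <= L)%N.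
Proof.
rewrite mem_undup; apply/flattenP/idP => [[s /mapP[k k_L ->] /mapP[t _ ->]]|eta_L].
  by move: k_L; rewrite mem_iota size_tuple; lia.
exists [seq tval t | t <- enum {: (size eta).-tuple bool}].
  by apply/mapP; exists (size eta) => //; rewrite mem_iota; lia.
by apply/mapP; exists (Tuple (eqxx (size eta))); rewrite ?mem_enum.
Qed.

Section Functional.
Context {R : realType} {T : set (seq bool * seq nat)} {f : (seq bool -> R) -> R}.
Hypothesis f_linear : linear_c00 f.
Implicit Types (x y : seq bool -> R).

Lemma linear_c00D {x y} : c00T x -> c00T y -> f (fun eta => x eta + y eta) = f x + f y.
Proof.
move=> x_c00 y_c00; have := f_linear _ _ 1 1 x_c00 y_c00; rewrite !mul1r => <-.
by congr f; apply/funext => eta; rewrite !mul1r.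
Qed.

Lemma linear_c00Z {x} c : c00T x -> f (fun eta => c * x eta) = c * f x.
Proof.
move=> x_c00; have := f_linear _ _ c 0 x_c00 x_c00; rewrite mul0r addr0 => <-.
by congr f; apply/funext => eta; rewrite mul0r addr0.
Qed.

Lemma linear_c00_lincomb F a : uniq F -> [::] \notin F ->
  f (lincomb F a) = \sum_(eta <- F) f (z R eta) * a eta.
Proof.
elim: F => [|xi F IHF] /=.
  move=> _ _; rewrite big_nil.
  have -> : lincomb [::] a = fun eta => 0 * lincomb [::] a eta.
    by apply/funext => eta; rewrite mul0r.
  by rewrite (linear_c00Z 0 (c00_lincomb [::] a isT)) mul0r.
move=> /andP[xi_F F_uniq]; rewrite inE negb_or => /andP[xi_neq nil_F].
have -> : lincomb (xi :: F) a = fun eta => a xi * z R xi eta + 1 * lincomb F a eta.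
  apply/funext => eta; rewrite /lincomb /z inE mul1r.
  by case: (eqVneq eta xi) => [->|] /=; rewrite ?(negbTE xi_F) ?mulr1 ?addr0 ?mulr0 ?add0r.
have z_c00 : c00T (z R xi) by apply: c00_z; rewrite eq_sym.
rewrite (f_linear _ _ _ _ z_c00 (c00_lincomb F a nil_F)) big_cons IHF //.
by rewrite mul1r mulrC.
Qed.

Lemma approx_of_tail_bound {eps L} : 0 <= eps ->
  (forall y, c00T y -> supported_beyond y L -> `|f y| <= eps * normT T y) ->
  exists (F : seq (seq bool)) (c : seq bool -> R), [::] \notin F /\
    forall x, c00T x -> `|f x - \sum_(eta <- F) c eta * x eta| <= eps * normT T x.
Proof.
move=> eps_ge0 tail_bd; exists (seqs_upto L), (fun eta => f (z R eta)).
have nil_F : [::] \notin seqs_upto L by rewrite mem_seqs_upto.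
split=> // x x_c00; pose y eta := if eta \notin seqs_upto L then x eta else 0.
have y_c00 : c00T y by apply: c00_mask.
have x_split : x = fun eta => lincomb (seqs_upto L) x eta + y eta.
  by apply/funext => eta; rewrite /y /lincomb; case: (eta \in _); rewrite ?addr0 ?add0r.
rewrite {1}x_split (linear_c00D (c00_lincomb _ x nil_F) y_c00).
rewrite linear_c00_lincomb ?undup_uniq //.
rewrite addrAC subrr add0r; apply: le_trans (tail_bd y y_c00 _) _.
  move=> eta; rewrite /y; case: ifPn => [eta_F x_eta|]; last by rewrite eqxx.
  have : eta != [::] by apply: contra_neq x_eta => ->; case: x_c00.
  by move: eta_F; rewrite mem_seqs_upto -size_eq0; set n := size eta; lia.
by rewrite ler_wpM2l // normT_mask.
Qed.

Lemma normalized_block {eps L y} : 0 <= eps -> c00T y -> supported_beyond y L ->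
  eps * normT T y < `|f y| ->
  exists x b, [/\ c00T x, (L.+1 < b)%N, supported_levels x L.+1 b,
                  normT T x <= 1 & eps <= f x].
Proof.
move=> eps_ge0 y_c00 y_beyond y_big.
have fy_gt0 : 0 < `|f y| by apply: le_lt_trans y_big; rewrite mulr_ge0 // normT_ge0.
have [b [Lb y_supp]] := supported_beyond_block y_c00 y_beyond.
exists (fun eta => eps / f y * y eta), b; split => //.
- exact: c00_scale.
- by move=> eta; rewrite mulf_eq0 negb_or => /andP[_]; apply: y_supp.
- apply: le_trans (normT_scale T y (eps / f y) y_c00) _.
  by rewrite normrM normfV ger0_norm // mulrAC ler_pdivrMr // mul1r ltW.
- by rewrite linear_c00Z // divfK // -normr_gt0.
Qed.

Lemma exp_growth_blocks {eps} : 0 <= eps ->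
  (forall L, exists y, [/\ c00T y, supported_beyond y L & eps * normT T y < `|f y|]) ->
  forall j L, exists x b, [/\ c00T x, (L.+1 < b)%N, supported_levels x L.+1 b,
                               normT T x <= 2 ^+ j & 3 ^+ j * eps <= f x].
Proof.
move=> eps_ge0 big_tails; elim=> [|j IHj] L.
  have [y [y_c00 y_beyond y_big]] := big_tails L.
  by rewrite expr0 mul1r; apply: normalized_block y_beyond y_big.
have [x1 [b1 [x1_c00 Lb1 x1_supp x1_norm x1_f]]] := IHj L.
have [x2 [b2 [x2_c00 b12 x2_supp x2_norm x2_f]]] := IHj b1.
have [x3 [b3 [x3_c00 b23 x3_supp x3_norm x3_f]]] := IHj b2.
have x2_supp' := supported_levelsW x2_supp (leqnSn b1) (leqnn b2).
have x3_supp' := supported_levelsW x3_supp (leqnSn b2) (leqnn b3).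
have x12_c00 := c00_add x1_c00 x2_c00.
exists (fun eta => x1 eta + x2 eta + x3 eta), b3; split.
- exact: c00_add.
- lia.
- apply: supported_levelsD; first apply: supported_levelsD.
  + by apply: (supported_levelsW x1_supp); lia.
  + by apply: (supported_levelsW x2_supp); lia.
  + by apply: (supported_levelsW x3_supp); lia.
- by rewrite exprS; apply: (normT_three_blocks T x1 x2 x3 L.+1 b1 b2 b3) => //; lia.
- by rewrite (linear_c00D x12_c00 x3_c00) (linear_c00D x1_c00 x2_c00) exprS; lra.
Qed.
End Functional.

Lemma expn2_mul_le_expn3 j : (2 ^ j * (j + 2) <= 2 * 3 ^ j)%N.
Proof. by elim: j => // j IHj; rewrite !expnS; nia. Qed.

Lemma exists_exp_gap {R : archiRealFieldType} (C : R) {eps : R} : 0 < eps ->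
  exists j, C * 2 ^+ j < eps * 3 ^+ j.
Proof.
move=> eps_gt0; set j := Num.bound (2 * `|C| / eps); exists j.
have : 2 * `|C| / eps < j%:R by apply: archi_boundP; rewrite divr_ge0 ?mulr_ge0 // ltW.
rewrite ltr_pdivrMr // => C_lt.
have := expn2_mul_le_expn3 j; rewrite -(ler_nat R) !natrM natrD !natrX => pow_le.
have P_gt0 : 0 < (2 : R) ^+ j by apply: exprn_gt0.
set P := (2 : R) ^+ j in pow_le P_gt0 *; set Q := (3 : R) ^+ j in pow_le *.
have := ler_wpM2l (ltW eps_gt0) pow_le.
have : P * (2 * `|C|) < P * (j%:R * eps) by rewrite ltr_pM2l.
have := ler_norm C; nra.
Qed.

Lemma shrinkingT_holds {R : realType} (T : set (seq bool * seq nat)) : shrinkingT R T.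
Proof.
move=> f f_linear [C f_bounded] eps eps_gt0.
have [[L tail_bd]|no_tail_bd] := pselect (exists L, forall y,
  c00T y -> supported_beyond y L -> `|f y| <= eps * normT T y).
  exact: (approx_of_tail_bound f_linear (ltW eps_gt0) tail_bd).
have big_tails L : exists y, [/\ c00T y, supported_beyond y L & eps * normT T y < `|f y|].
  apply: contrapT => no_y; apply: no_tail_bd; exists L => y y_c00 y_beyond.
  by rewrite leNgt; apply/negP => y_big; apply: no_y; exists y.
have [j gap] := exists_exp_gap `|C| eps_gt0.
have [x [_ [x_c00 _ _ x_norm x_f]]] := exp_growth_blocks f_linear (ltW eps_gt0) big_tails j 0.
suff : eps * 3 ^+ j <= `|C| * 2 ^+ j by rewrite leNgt gap.
rewrite mulrC; apply: le_trans x_f (le_trans (ler_norm _) (le_trans (f_bounded x x_c00) _)).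
apply: le_trans (ler_wpM2r (normT_ge0 T x_c00) (ler_norm C)) _.
by rewrite ler_wpM2l.
Qed.

Theorem lemma5p5 (R : realType) (T : set (seq bool * seq nat)) :
  is_tree2N T ->
  (forall eta : seq bool, eta != [::] -> 0 < normT T (z R eta)) /\
  (forall (A B : seq (seq bool)) (a : seq bool -> R),
      [::] \notin B -> {subset A <= B} ->
      normT T (lincomb A a) <= normT T (lincomb B a)) /\
  shrinkingT R T.
Proof.
move=> _; split; first exact: normT_z_gt0.
split; last exact: shrinkingT_holds.
exact: normT_lincomb_subset.
Qed.
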